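(* Let $\mathcal{X}\subseteq\mathbb{R}^d$, $\mathcal{Y}=\{-1,+1\}$, and let $p(\bm{x},y)$ be a joint distribution on $\mathcal{X}\times\mathcal{Y}$ with $\pi_+=p(y=+1)\in(0,1)$, $\pi_-=1-\pi_+$, $\pi_+\neq 1/2$, and class-conditional densities $p_\pm(\bm{x})=p(\bm{x}\mid y=\pm1)$. Let $\ell:\mathbb{R}\times\mathcal{Y}\to[0,\infty)$ be a loss and $R(g)=\mathbb{E}_{p(\bm{x},y)}[\ell(g(\bm{x}),y)]$ for $g:\mathcal{X}\to\mathbb{R}$. Let $\widehat{R}_{\mathrm{SD}}(g)$ and $\widehat{R}_{\mathrm{PC}}(g)$ be the estimators defined in the context below (computed from data distributed as described there). Then for every $\gamma\in[0,1]$ and every $g$ for which the expectations below are finite, $$\mathbb{E}\big[\gamma\,\widehat{R}_{\mathrm{SD}}(g)+(1-\gamma)\,\widehat{R}_{\mathrm{PC}}(g)\big]=R(g),$$ i.e. $\widehat{R}_{\mathrm{SD\text{-}PC\text{-}Convex}}(g):=\gamma\widehat{R}_{\mathrm{SD}}(g)+(1-\gamma)\widehat{R}_{\mathrm{PC}}(g)$ is an unbiased estimator of the classification risk $R(g)$.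
   Context: Similarity/dissimilarity (SD) data: two labeled examples $(\bm{x},y),(\bm{x}',y')$ drawn independently from $p(\bm x,y)$ form a similar pair if $y=y'$ and a dissimilar pair otherwise. Put $\pi_{\mathrm S}=\pi_+^2+\pi_-^2$, $\pi_{\mathrm D}=2\pi_+\pi_-$, and $p_{\mathrm S}(\bm{x},\bm{x}')=\frac{\pi_+^2}{\pi_{\mathrm S}}p_+(\bm{x})p_+(\bm{x}')+\frac{\pi_-^2}{\pi_{\mathrm S}}p_-(\bm{x})p_-(\bm{x}')$, $p_{\mathrm D}(\bm{x},\bm{x}')=\frac12p_+(\bm{x})p_-(\bm{x}')+\frac12p_-(\bm{x})p_+(\bm{x}')$. Let $\{(\bm{x}_{\mathrm S,i},\bm{x}'_{\mathrm S,i})\}_{i=1}^{n_{\mathrm S}}$ be i.i.d. from $p_{\mathrm S}$ and $\{(\bm{x}_{\mathrm D,i},\bm{x}'_{\mathrm D,i})\}_{i=1}^{n_{\mathrm D}}$ i.i.d. from $p_{\mathrm D}$. With $\mathcal{L}(z,t):=\frac{\pi_+}{\pi_+-\pi_-}\ell(z,t)-\frac{\pi_-}{\pi_+-\pi_-}\ell(z,-t)$, $\widehat{R}_{\mathrm{SD}}(g)=\frac{\pi_{\mathrm S}}{n_{\mathrm S}}\sum_{i=1}^{n_{\mathrm S}}\frac{\mathcal{L}(g(\bm{x}_{\mathrm S,i}),+1)+\mathcal{L}(g(\bm{x}'_{\mathrm S,i}),+1)}{2}+\frac{\pi_{\mathrm D}}{n_{\mathrm D}}\sum_{i=1}^{n_{\mathrm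 D}}\frac{\mathcal{L}(g(\bm{x}_{\mathrm D,i}),-1)+\mathcal{L}(g(\bm{x}'_{\mathrm D,i}),-1)}{2}$. Pairwise comparison (Pcomp) data: define the densities $\widetilde{p}_+(\bm{x})=\frac{\pi_+}{\pi_-^2+\pi_+}p_+(\bm{x})+\frac{\pi_-^2}{\pi_-^2+\pi_+}p_-(\bm{x})$ and $\widetilde{p}_-(\bm{x})=\frac{\pi_+^2}{\pi_+^2+\pi_-}p_+(\bm{x})+\frac{\pi_-}{\pi_+^2+\pi_-}p_-(\bm{x})$ (the marginal distributions of the instance judged more likely, respectively less likely, to be positive in a pairwise comparison). Let $\{(\bm{x}_i,\bm{x}'_i)\}_{i=1}^n$ be i.i.d. pairs with $\bm{x}_i\sim\widetilde p_+$ and $\bm{x}'_i\sim\widetilde p_-$, and $\widehat{R}_{\mathrm{PC}}(g)=\frac1n\sum_{i=1}^n\big(\ell(g(\bm{x}_i),+1)-\pi_+\ell(g(\bm{x}_i),-1)+\ell(g(\bm{x}'_i),-1)-\pi_-\ell(g(\bm{x}'_i),+1)\big)$. *)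

From mathcomp Require Import all_boot all_order all_algebra.
From mathcomp Require Import all_classical all_reals all_analysis.
Set Implicit Arguments. Unset Strict Implicit. Unset Printing Implicit Defensive.
Import Order.TTheory GRing.Theory Num.Theory.
Local Open Scope classical_set_scope.
Local Open Scope ring_scope.

(* Labels: [true] stands for y = +1 and [false] for y = -1. *)

Section SDPC.
Variable R : realType.

Definition piS (pip : R) : R := pip ^+ 2 + (1 - pip) ^+ 2.
Definition piD (pip : R) : R := 2 * pip * (1 - pip).

Definition corr_loss (pip : R) (l : R -> bool -> R) (z : R) (t : bool) : R :=
  pip / (pip - (1 - pip)) * l z t - (1 - pip) / (pip - (1 - pip)) * l z (~~ t).

Variables (d : measure_display) (X : measurableType d).

Definition pS_meas (pip : R) (pP pN : {measure set X -> \bar R})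
    (B : set (X * X)) : \bar R :=
  ((pip ^+ 2 / piS pip)%:E * (pP \x pP)%E B
   + ((1 - pip) ^+ 2 / piS pip)%:E * (pN \x pN)%E B)%E.

Definition pD_meas (pP pN : {measure set X -> \bar R})
    (B : set (X * X)) : \bar R :=
  ((1 / 2 : R)%:E * (pP \x pN)%E B + (1 / 2 : R)%:E * (pN \x pP)%E B)%E.

Definition ptilde_pos (pip : R) (pP pN : {measure set X -> \bar R})
    (A : set X) : \bar R :=
  ((pip / ((1 - pip) ^+ 2 + pip))%:E * pP A
   + ((1 - pip) ^+ 2 / ((1 - pip) ^+ 2 + pip))%:E * pN A)%E.

Definition ptilde_neg (pip : R) (pP pN : {measure set X -> \bar R})
    (A : set X) : \bar R :=
  ((pip ^+ 2 / (pip ^+ 2 + (1 - pip)))%:E * pP A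
   + ((1 - pip) / (pip ^+ 2 + (1 - pip)))%:E * pN A)%E.

Definition R_SD (pip : R) (l : R -> bool -> R) (g : X -> R) (nS nD : nat)
    (xS xS' : 'I_nS -> X) (xD xD' : 'I_nD -> X) : R :=
  piS pip / nS%:R * \sum_(i < nS)
      (corr_loss pip l (g (xS i)) true + corr_loss pip l (g (xS' i)) true) / 2
  + piD pip / nD%:R * \sum_(i < nD)
      (corr_loss pip l (g (xD i)) false + corr_loss pip l (g (xD' i)) false) / 2.

Definition R_PC (pip : R) (l : R -> bool -> R) (g : X -> R) (n : nat)
    (x x' : 'I_n -> X) : R :=
  1 / n%:R * \sum_(i < n)
    (l (g (x i)) true - pip * l (g (x i)) false
     + l (g (x' i)) false - (1 - pip) * l (g (x' i)) true).

End SDPC.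

(* Mutual independence of a finite family of random elements Z i : Omega -> T:
   the product rule for every choice of measurable events (taking [A i = setT]
   recovers the rule for every subfamily). *)
Definition mutually_independent (R : realType) (dO : measure_display)
    (Omega : measurableType dO) (dT : measure_display) (T : measurableType dT)
    (P : probability Omega R) (I : finType) (Z : I -> Omega -> T) : Prop :=
  forall A : I -> set T, (forall i, measurable (A i)) ->
    P (\bigcap_(i in [set: I]) (Z i @^-1` A i)) =
    (\prod_(i : I) P (Z i @^-1` A i))%E.

Definition all_pairs (dO : measure_display) (Omega : measurableType dO)
    (d : measure_display) (X : measurableType d) (nS nD n : nat)
    (xS xS' : 'I_nS -> Omega -> X) (xD xD' : 'I_nD -> Omega -> X)
    (x x' : 'I_n -> Omega -> X) : ('I_nS + 'I_nD + 'I_n)%type -> Omega -> (X * X)%type :=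
  fun k w => match k with
             | inl (inl i) => (xS i w, xS' i w)
             | inl (inr i) => (xD i w, xD' i w)
             | inr i => (x i w, x' i w)
             end.

From mathcomp Require Import all_boot all_order all_algebra.
From mathcomp Require Import all_classical all_reals all_analysis.
From mathcomp Require Import measurable_realfun.
From mathcomp Require Import ring lra.
Import Order.TTheory GRing.Theory Num.Theory.
Local Open Scope classical_set_scope.
Local Open Scope ring_scope.

(* Both estimators are averages of terms that each depend on a single instance,
   so by linearity of expectation only the marginal law of each instance
   matters.  Every such marginal (of p_S, p_D, p~_+, p~_-) is a mixture
   a p_+ + b p_-, so every term has expectation
   a E_+[l(g x, t)] + b E_-[l(g x, t)].  The weights of the corrected loss and
   of the Pcomp estimator are exactly those for which the resulting linear
   combination collapses to pi_+ E_+[l(g x, +1)] + pi_- E_-[l(g x, -1)] = R(g),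
   and a convex combination of two unbiased estimators is unbiased. *)

Section HasIntegral.
Context {R : realType} {d : measure_display} {T : measurableType d}.
Context {mu : {measure set T -> \bar R}}.

Definition has_integral (h : T -> R) (v : R) :=
  mu.-integrable setT (EFin \o h) /\ (\int[mu]_w (h w)%:E = v%:E)%E.

Lemma has_integral0 : has_integral (fun=> 0) 0.
Proof. by split; [exact: integrable0 | exact: integral0]. Qed.

Lemma has_integralD {h1 h2 v1 v2} : has_integral h1 v1 -> has_integral h2 v2 ->
  has_integral (fun w => h1 w + h2 w) (v1 + v2).
Proof.
move=> [i1 e1] [i2 e2]; split.
  by under [EFin \o _]funext => w do rewrite /= EFinD; exact: integrableD.
by under eq_integral => w _ do rewrite EFinD; rewrite integralD_EFin // e1 e2.
Qed.

Lemma has_integralB {h1 h2 v1 v2} : has_integral h1 v1 -> has_integral h2 v2 ->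
  has_integral (fun w => h1 w - h2 w) (v1 - v2).
Proof.
move=> [i1 e1] [i2 e2]; split.
  by under [EFin \o _]funext => w do rewrite /= EFinB; exact: integrableB.
by under eq_integral => w _ do rewrite EFinB; rewrite integralB_EFin // e1 e2.
Qed.

Lemma has_integralZl c {h v} : has_integral h v ->
  has_integral (fun w => c * h w) (c * v).
Proof.
move=> [i e]; split.
  by under [EFin \o _]funext => w do rewrite /= EFinM; exact: integrableZl.
by under eq_integral => w _ do rewrite EFinM; rewrite integralZl // e.
Qed.

Lemma has_integralZr c {h v} : has_integral h v ->
  has_integral (fun w => h w * c) (v * c).
Proof.
rewrite mulrC; under [fun w => h w * c]funext => w do rewrite mulrC.
exact: has_integralZl.
Qed.

Lemma has_integral_sum {I : Type} (s : seq I) {h : I -> T -> R} {v : I -> R} :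
  (forall i, has_integral (h i) (v i)) ->
  has_integral (fun w => \sum_(i <- s) h i w) (\sum_(i <- s) v i).
Proof.
move=> hv; elim: s => [|i s ih].
  by under [fun w => _]funext => w do rewrite big_nil; rewrite big_nil; exact: has_integral0.
under [fun w => _]funext => w do rewrite big_cons.
by rewrite big_cons; exact: has_integralD.
Qed.

Lemma has_integral_midpoint {h1 h2 v} : has_integral h1 v -> has_integral h2 v ->
  has_integral (fun w => (h1 w + h2 w) / 2) v.
Proof.
move=> e1 e2; have := has_integralZr 2^-1 (has_integralD e1 e2).
by rewrite mulrDl -splitr.
Qed.

Lemma has_integral_scaled_mean {k : nat} (s : R) {c : R} {h : 'I_k -> T -> R} :
  (0 < k)%N -> (forall i, has_integral (h i) c) ->
  has_integral (fun w => s / k%:R * \sum_(i < k) h i w) (s * c).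
Proof.
move=> k_gt0 hc; have := has_integralZl (s / k%:R) (has_integral_sum (index_enum 'I_k) hc).
rewrite sumr_const card_ord -[c *+ k]mulr_natr mulrCA mulfVK; first by rewrite [c * s]mulrC.
by rewrite pnatr_eq0 -lt0n.
Qed.

(* [fun=> m] is the constant loss [z |-> m], so the value is the corrected
   combination of the two expectations. *)
Lemma has_integral_corr_loss (pip : R) (l : R -> bool -> R) {h : T -> R}
    {m : bool -> R} (t : bool) :
  (forall t, has_integral (fun w => l (h w) t) (m t)) ->
  has_integral (fun w => corr_loss pip l (h w) t) (corr_loss pip (fun=> m) 0 t).
Proof. by move=> hm; apply: has_integralB; exact: has_integralZl. Qed.

End HasIntegral.
Arguments has_integral {R d T} mu h v.

Section Mixture.
Context {R : realType} {d : measure_display} {T : measurableType d}.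
Context {nu m1 m2 : {measure set T -> \bar R}} {a b : R}.
Hypotheses (a_ge0 : 0 <= a) (b_ge0 : 0 <= b).
Hypothesis nuE : forall A, measurable A -> nu A = (a%:E * m1 A + b%:E * m2 A)%E.

Lemma ge0_integral_mixture (f : T -> \bar R) :
  measurable_fun setT f -> (forall x, (0 <= f x)%E) ->
  (\int[nu]_x f x = a%:E * \int[m1]_x f x + b%:E * \int[m2]_x f x)%E.
Proof.
move=> mf f_ge0.
pose nu' := measure_add (mscale (NngNum a_ge0) m1) (mscale (NngNum b_ge0) m2).
rewrite [LHS](eq_measure_integral nu'); last first.
  move=> A mA _; rewrite /= /measure_add /msum /= 2!big_ord_recl big_ord0 adde0.
  by rewrite /mscale /= nuE.
by rewrite ge0_integral_measure_add // ?ge0_integral_mscale.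
Qed.

End Mixture.

Section MixtureLaw.
Context {R : realType} {d : measure_display} {X : measurableType d}.
Context {dO : measure_display} {Omega : measurableType dO}.
Context {P : {measure set Omega -> \bar R}} {pP pN : {measure set X -> \bar R}}.
Context {Y : Omega -> X} {a b : R}.
Hypotheses (mY : measurable_fun setT Y) (a_ge0 : 0 <= a) (b_ge0 : 0 <= b).
Hypothesis lawY : forall A, measurable A ->
  P (Y @^-1` A) = (a%:E * pP A + b%:E * pN A)%E.

Lemma ge0_integral_mixture_law (f : X -> R) :
  measurable_fun setT f -> (forall x, 0 <= f x) ->
  (\int[P]_w (f (Y w))%:E =
   a%:E * \int[pP]_x (f x)%:E + b%:E * \int[pN]_x (f x)%:E)%E.
Proof.
move=> mf f_ge0.
have mEf : measurable_fun setT (fun x => (f x)%:E) by exact/measurable_EFinP.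
transitivity (\int[pushforward P Y]_x (f x)%:E)%E.
  by rewrite (ge0_integral_pushforward mY) // => x _; rewrite lee_fin.
by apply: ge0_integral_mixture => // x; rewrite lee_fin.
Qed.

Lemma has_integral_mixture_law (f : X -> R) :
  measurable_fun setT f -> (forall x, 0 <= f x) ->
  pP.-integrable setT (EFin \o f) -> pN.-integrable setT (EFin \o f) ->
  has_integral P (f \o Y)
    (a * fine (\int[pP]_x (f x)%:E) + b * fine (\int[pN]_x (f x)%:E)).
Proof.
move=> mf f_ge0 iP iN.
have E : (\int[P]_w (f (Y w))%:E =
    (a * fine (\int[pP]_x (f x)%:E) + b * fine (\int[pN]_x (f x)%:E))%:E)%E.
  rewrite ge0_integral_mixture_law // EFinD !EFinM.
  by rewrite !fineK // (integrable_fin_num measurableT).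
split=> //; apply/integrableP; split.
  exact/measurable_EFinP/measurableT_comp.
rewrite (eq_integral (fun w => (f (Y w))%:E)) ?E ?ltry // => w _.
by rewrite /= ger0_norm.
Qed.

End MixtureLaw.

Section LabelDecomposition.
Context {R : realType} {d : measure_display} {X : measurableType d}.
Context {mu : {measure set (X * bool) -> \bar R}} {pP pN : {measure set X -> \bar R}}.
Context {p q : R}.
Hypotheses (p_ge0 : 0 <= p) (q_ge0 : 0 <= q).
Hypothesis mu_true : forall A, measurable A -> mu (A `*` [set true]) = (p%:E * pP A)%E.
Hypothesis mu_false : forall A, measurable A -> mu (A `*` [set false]) = (q%:E * pN A)%E.

Lemma split_label (B : set (X * bool)) :
  B = (pair^~ true @^-1` B `*` [set true]) `|` (pair^~ false @^-1` B `*` [set false]).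
Proof.
apply/seteqP; split=> [[x []] Bx|[x b] [[/= Bx ->]|[/= Bx ->]]] //.
- by left.
- by right.
Qed.

Lemma measurable_label_slice (B : set (X * bool)) (t : bool) :
  measurable B -> measurable (pair^~ t @^-1` B).
Proof. by move=> mB; rewrite -[X in measurable X]setTI; exact: pair2_measurable. Qed.

Lemma ge0_integral_label_decomposition (F : X -> bool -> R) :
  (forall t, measurable_fun setT (F^~ t)) -> (forall x t, 0 <= F x t) ->
  (\int[mu]_z (F z.1 z.2)%:E =
   p%:E * \int[pP]_x (F x true)%:E + q%:E * \int[pN]_x (F x false)%:E)%E.
Proof.
move=> mF F_ge0.
have mEF : measurable_fun setT (fun z : X * bool => (F z.1 z.2)%:E).
  apply/measurable_EFinP => _ A mA; rewrite setTI [X in measurable X]split_label.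
  by apply: measurableU; apply: measurableX => //; rewrite -[X in measurable X]setTI; exact: mF.
(* mu is the mixture of the images of pP and pN under [x |-> (x, true)] and
   [x |-> (x, false)]; the measure structure of these images depends on a
   measurability proof, which the last step supplies. *)
have m_true := @pair2_measurable _ _ X bool true.
have m_false := @pair2_measurable _ _ X bool false.
transitivity (p%:E * \int[pushforward pP (pair^~ true)]_z (F z.1 z.2)%:E
            + q%:E * \int[pushforward pN (pair^~ false)]_z (F z.1 z.2)%:E)%E.
  apply: ge0_integral_mixture => // [B mB|z]; last by rewrite lee_fin.
  rewrite /pushforward -mu_true -?mu_false; try exact: measurable_label_slice.
  rewrite -measureU -?split_label //; try by apply: measurableX => //; exact: measurable_label_slice.
  by apply/seteqP; split=> [[x b] /= [[_ ->] [_]]|].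
have EF_ge0 z : z \in [set: X * bool] -> (0 <= (F z.1 z.2)%:E)%E by rewrite lee_fin.
by congr (_ * _ + _ * _)%E; [apply: (ge0_integral_pushforward m_true) |
                            apply: (ge0_integral_pushforward m_false)].
Qed.

End LabelDecomposition.

Lemma preimage_pair_setXT {T U V : Type} (Y1 : T -> U) (Y2 : T -> V) (A : set U) :
  (fun w => (Y1 w, Y2 w)) @^-1` (A `*` setT) = Y1 @^-1` A.
Proof. by apply/seteqP; split=> w //= []. Qed.

Lemma preimage_pair_setTX {T U V : Type} (Y1 : T -> U) (Y2 : T -> V) (A : set V) :
  (fun w => (Y1 w, Y2 w)) @^-1` (setT `*` A) = Y2 @^-1` A.
Proof. by apply/seteqP; split=> w //= []. Qed.

Section ProductMarginals.
Context {R : realType} {d1 d2 : measure_display}.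
Context {X1 : measurableType d1} {X2 : measurableType d2}.
Variables (p1 : probability X1 R) (p2 : probability X2 R).

Lemma product_probability_setXT (A : set X1) :
  measurable A -> ((p1 \x p2) (A `*` setT) = p1 A)%E.
Proof. by move=> mA; rewrite -[RHS]mule1 -(probability_setT p2); exact: product_measure1E. Qed.

Lemma product_probability_setTX (A : set X2) :
  measurable A -> ((p1 \x p2) (setT `*` A) = p2 A)%E.
Proof. by move=> mA; rewrite -[RHS]mul1e -(probability_setT p1); exact: product_measure1E. Qed.

End ProductMarginals.

Section PairMarginals.
Context {R : realType} {d : measure_display} {X : measurableType d}.
Variables (pip : R) (pP pN : probability X R).

Lemma pS_meas_setXT A : measurable A -> pS_meas pip pP pN (A `*` setT) =
  ((pip ^+ 2 / piS pip)%:E * pP A + ((1 - pip) ^+ 2 / piS pip)%:E * pN A)%E.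
Proof. by move=> mA; rewrite /pS_meas !product_probability_setXT. Qed.

Lemma pS_meas_setTX A : measurable A -> pS_meas pip pP pN (setT `*` A) =
  ((pip ^+ 2 / piS pip)%:E * pP A + ((1 - pip) ^+ 2 / piS pip)%:E * pN A)%E.
Proof. by move=> mA; rewrite /pS_meas !product_probability_setTX. Qed.

Lemma pD_meas_setXT A : measurable A ->
  pD_meas pP pN (A `*` setT) = ((1 / 2)%:E * pP A + (1 / 2)%:E * pN A)%E.
Proof. by move=> mA; rewrite /pD_meas !product_probability_setXT. Qed.

Lemma pD_meas_setTX A : measurable A ->
  pD_meas pP pN (setT `*` A) = ((1 / 2)%:E * pP A + (1 / 2)%:E * pN A)%E.
Proof. by move=> mA; rewrite /pD_meas !product_probability_setTX // addeC. Qed.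

End PairMarginals.

Section Unbiasedness.
Context {R : realType} {d : measure_display} {X : measurableType d}.
Context {dO : measure_display} {Omega : measurableType dO}.
Variables (P : probability Omega R) (pP pN : probability X R).
Variables (pip : R) (l : R -> bool -> R) (g : X -> R).
Hypotheses (pip_gt0 : 0 < pip) (pip_lt1 : pip < 1) (pip_neq_half : pip != 1 / 2).
Hypothesis l_ge0 : forall z t, 0 <= l z t.
Hypothesis mlg : forall t, measurable_fun setT (fun x => l (g x) t).
Hypothesis intP : forall t, pP.-integrable setT (fun x => (l (g x) t)%:E).
Hypothesis intN : forall t, pN.-integrable setT (fun x => (l (g x) t)%:E).

Let pip_ge0 : 0 <= pip. Proof. exact: ltW. Qed.
Let pip_compl_ge0 : 0 <= 1 - pip. Proof. by rewrite subr_ge0 ltW. Qed.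
Let piS_gt0 : 0 < piS pip. Proof. by rewrite /piS; nra. Qed.
Let pip_diff_neq0 : pip - (1 - pip) != 0.
Proof. by apply: contra pip_neq_half => /eqP h; apply/eqP; lra. Qed.

Definition cond_risk (p : {measure set X -> \bar R}) (t : bool) : R :=
  fine (\int[p]_x (l (g x) t)%:E).

Definition mixture_risk (a b : R) (t : bool) : R :=
  a * cond_risk pP t + b * cond_risk pN t.

Definition risk : R := pip * cond_risk pP true + (1 - pip) * cond_risk pN false.

Lemma integral_risk (mu : probability (X * bool)%type R) :
  (forall A, measurable A -> mu (A `*` [set true]) = (pip%:E * pP A)%E) ->
  (forall A, measurable A -> mu (A `*` [set false]) = ((1 - pip)%:E * pN A)%E) ->
  (\int[mu]_z (l (g z.1) z.2)%:E = risk%:E)%E.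
Proof.
move=> mu_true mu_false.
rewrite (ge0_integral_label_decomposition pip_ge0 pip_compl_ge0 mu_true mu_false
  (fun x t => l (g x) t)) //.
by rewrite /risk /cond_risk [RHS]EFinD !EFinM !fineK // (integrable_fin_num measurableT).
Qed.

Lemma has_integral_loss_mixture {Y : Omega -> X} {a b : R} (t : bool) :
  measurable_fun setT Y -> 0 <= a -> 0 <= b ->
  (forall A, measurable A -> P (Y @^-1` A) = (a%:E * pP A + b%:E * pN A)%E) ->
  has_integral P (fun w => l (g (Y w)) t) (mixture_risk a b t).
Proof.
move=> mY a_ge0 b_ge0 lawY.
exact: (has_integral_mixture_law mY a_ge0 b_ge0 lawY _ (mlg t) (fun=> l_ge0 _ _) (intP t) (intN t)).
Qed.

Lemma has_integral_loss_fst {Y1 Y2 : Omega -> X} {Q : set (X * X) -> \bar R}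
    {a b : R} (t : bool) :
  measurable_fun setT Y1 -> 0 <= a -> 0 <= b ->
  (forall B, measurable B -> P ((fun w => (Y1 w, Y2 w)) @^-1` B) = Q B) ->
  (forall A, measurable A -> Q (A `*` setT) = (a%:E * pP A + b%:E * pN A)%E) ->
  has_integral P (fun w => l (g (Y1 w)) t) (mixture_risk a b t).
Proof.
move=> mY1 a_ge0 b_ge0 lawY QE; apply: has_integral_loss_mixture => // A mA.
rewrite -QE // -lawY; last exact: measurableX.
by rewrite -(preimage_pair_setXT Y1 Y2).
Qed.

Lemma has_integral_loss_snd {Y1 Y2 : Omega -> X} {Q : set (X * X) -> \bar R}
    {a b : R} (t : bool) :
  measurable_fun setT Y2 -> 0 <= a -> 0 <= b ->
  (forall B, measurable B -> P ((fun w => (Y1 w, Y2 w)) @^-1` B) = Q B) ->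
  (forall A, measurable A -> Q (setT `*` A) = (a%:E * pP A + b%:E * pN A)%E) ->
  has_integral P (fun w => l (g (Y2 w)) t) (mixture_risk a b t).
Proof.
move=> mY2 a_ge0 b_ge0 lawY QE; apply: has_integral_loss_mixture => // A mA.
rewrite -QE // -lawY; last exact: measurableX.
by rewrite -(preimage_pair_setTX Y1 Y2).
Qed.

Lemma has_integral_R_SD {nS nD : nat} (xS xS' : 'I_nS -> Omega -> X)
    (xD xD' : 'I_nD -> Omega -> X) :
  (0 < nS)%N -> (0 < nD)%N ->
  (forall i, measurable_fun setT (xS i)) -> (forall i, measurable_fun setT (xS' i)) ->
  (forall i, measurable_fun setT (xD i)) -> (forall i, measurable_fun setT (xD' i)) ->
  (forall i B, measurable B ->
     P ((fun w => (xS i w, xS' i w)) @^-1` B) = pS_meas pip pP pN B) ->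
  (forall i B, measurable B ->
     P ((fun w => (xD i w, xD' i w)) @^-1` B) = pD_meas pP pN B) ->
  has_integral P (fun w => R_SD pip l g (fun i => xS i w) (fun i => xS' i w)
                                        (fun i => xD i w) (fun i => xD' i w)) risk.
Proof.
move=> nS_gt0 nD_gt0 mxS mxS' mxD mxD' lawS lawD.
have aS_ge0 : 0 <= pip ^+ 2 / piS pip by rewrite divr_ge0 ?sqr_ge0 ?ltW.
have bS_ge0 : 0 <= (1 - pip) ^+ 2 / piS pip by rewrite divr_ge0 ?sqr_ge0 ?ltW.
have half_ge0 : 0 <= 1 / 2 :> R by rewrite divr_ge0.
have termS (i : 'I_nS) := has_integral_midpoint
  (has_integral_corr_loss pip l true (fun t =>
     has_integral_loss_fst t (mxS i) aS_ge0 bS_ge0 (lawS i) (pS_meas_setXT pip pP pN)))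
  (has_integral_corr_loss pip l true (fun t =>
     has_integral_loss_snd t (mxS' i) aS_ge0 bS_ge0 (lawS i) (pS_meas_setTX pip pP pN))).
have termD (i : 'I_nD) := has_integral_midpoint
  (has_integral_corr_loss pip l false (fun t =>
     has_integral_loss_fst t (mxD i) half_ge0 half_ge0 (lawD i) (pD_meas_setXT pP pN)))
  (has_integral_corr_loss pip l false (fun t =>
     has_integral_loss_snd t (mxD' i) half_ge0 half_ge0 (lawD i) (pD_meas_setTX pP pN))).
have := has_integralD (has_integral_scaled_mean (piS pip) nS_gt0 termS)
                      (has_integral_scaled_mean (piD pip) nD_gt0 termD).
move=> [iSD E]; split=> //; rewrite /R_SD E; congr EFin.
rewrite /corr_loss /mixture_risk /risk /piS /piD.
by field; rewrite pip_diff_neq0 /=; exact: lt0r_neq0.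
Qed.

Lemma has_integral_R_PC {n : nat} (x x' : 'I_n -> Omega -> X) :
  (0 < n)%N ->
  (forall i, measurable_fun setT (x i)) -> (forall i, measurable_fun setT (x' i)) ->
  (forall i A, measurable A -> P (x i @^-1` A) = ptilde_pos pip pP pN A) ->
  (forall i A, measurable A -> P (x' i @^-1` A) = ptilde_neg pip pP pN A) ->
  has_integral P (fun w => R_PC pip l g (fun i => x i w) (fun i => x' i w)) risk.
Proof.
move=> n_gt0 mx mx' lawx lawx'.
have denP_gt0 : 0 < (1 - pip) ^+ 2 + pip by nra.
have denN_gt0 : 0 < pip ^+ 2 + (1 - pip) by nra.
have aP_ge0 : 0 <= pip / ((1 - pip) ^+ 2 + pip) by rewrite divr_ge0 ?ltW.
have bP_ge0 : 0 <= (1 - pip) ^+ 2 / ((1 - pip) ^+ 2 + pip) by rewrite divr_ge0 ?sqr_ge0 ?ltW.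
have aN_ge0 : 0 <= pip ^+ 2 / (pip ^+ 2 + (1 - pip)) by rewrite divr_ge0 ?sqr_ge0 ?ltW.
have bN_ge0 : 0 <= (1 - pip) / (pip ^+ 2 + (1 - pip)) by rewrite divr_ge0 // ltW.
have loss_x i t := has_integral_loss_mixture t (mx i) aP_ge0 bP_ge0 (lawx i).
have loss_x' i t := has_integral_loss_mixture t (mx' i) aN_ge0 bN_ge0 (lawx' i).
have term (i : 'I_n) := has_integralB
  (has_integralD (has_integralB (loss_x i true) (has_integralZl pip (loss_x i false)))
                 (loss_x' i false))
  (has_integralZl (1 - pip) (loss_x' i true)).
have [iPC E] := has_integral_scaled_mean 1 n_gt0 term.
split=> //; rewrite /R_PC E; congr EFin.
rewrite /mixture_risk /risk.
by field; rewrite !lt0r_neq0.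
Qed.

End Unbiasedness.

Theorem theorem3p1
  (R : realType) (d : measure_display) (X : measurableType d)
  (* joint distribution p(x,y) on X * Y, with y = +1 encoded as [true] *)
  (mu : probability (X * bool)%type R)
  (pip : R) (pP pN : probability X R)
  (hpi : 0 < pip < 1) (hpi_half : pip != 1 / 2)
  (hmuP : forall A : set X, measurable A ->
     mu (A `*` [set true]) = (pip%:E * pP A)%E)
  (hmuN : forall A : set X, measurable A ->
     mu (A `*` [set false]) = ((1 - pip)%:E * pN A)%E)
  (l : R -> bool -> R) (hl0 : forall z t, 0 <= l z t)
  (hl : forall t, measurable_fun [set: R] (fun z => l z t))
  (g : X -> R) (hg : measurable_fun [set: X] g)
  (hintP : forall t, pP.-integrable [set: X] (fun x => (l (g x) t)%:E))
  (hintN : forall t, pN.-integrable [set: X] (fun x => (l (g x) t)%:E))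
  (dO : measure_display) (Omega : measurableType dO) (P : probability Omega R)
  (nS nD n : nat) (hnS : (0 < nS)%N) (hnD : (0 < nD)%N) (hn : (0 < n)%N)
  (xS xS' : 'I_nS -> Omega -> X) (xD xD' : 'I_nD -> Omega -> X)
  (x x' : 'I_n -> Omega -> X)
  (mxS : forall i, measurable_fun [set: Omega] (xS i))
  (mxS' : forall i, measurable_fun [set: Omega] (xS' i))
  (mxD : forall i, measurable_fun [set: Omega] (xD i))
  (mxD' : forall i, measurable_fun [set: Omega] (xD' i))
  (mx : forall i, measurable_fun [set: Omega] (x i))
  (mx' : forall i, measurable_fun [set: Omega] (x' i))
  (hS : forall i (B : set (X * X)), measurable B ->
     P ((fun w => (xS i w, xS' i w)) @^-1` B) = pS_meas pip pP pN B)
  (hD : forall i (B : set (X * X)), measurable B ->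
     P ((fun w => (xD i w, xD' i w)) @^-1` B) = pD_meas pP pN B)
  (hx : forall i (A : set X), measurable A ->
     P (x i @^-1` A) = ptilde_pos pip pP pN A)
  (hx' : forall i (A : set X), measurable A ->
     P (x' i @^-1` A) = ptilde_neg pip pP pN A)
  (hind : mutually_independent P (all_pairs xS xS' xD xD' x x'))
  (gamma : R) (hgamma : 0 <= gamma <= 1) :
  (\int[P]_w
     (gamma * R_SD pip l g (fun i => xS i w) (fun i => xS' i w)
                           (fun i => xD i w) (fun i => xD' i w)
      + (1 - gamma) * R_PC pip l g (fun i => x i w) (fun i => x' i w))%:E
   = \int[mu]_z (l (g z.1) z.2)%:E)%E.
Proof.
have [pip_gt0 pip_lt1] := andP hpi.
have mlg t : measurable_fun setT (fun x => l (g x) t) := measurableT_comp (hl t) hg.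
have SD := has_integral_R_SD P pP pN pip l g hpi_half hl0 mlg hintP hintN
  xS xS' xD xD' hnS hnD mxS mxS' mxD mxD' hS hD.
have PC := has_integral_R_PC P pP pN pip l g pip_gt0 pip_lt1 hl0 mlg hintP hintN
  x x' hn mx mx' hx hx'.
have [_ ->] := has_integralD (has_integralZl gamma SD) (has_integralZl (1 - gamma) PC).
rewrite (integral_risk pP pN pip l g pip_gt0 pip_lt1 hl0 mlg hintP hintN mu hmuP hmuN).
by rewrite -mulrDl addrC subrK mul1r.
Qed.
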